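(* Consider the weighted-median opinion dynamics on a row-stochastic influence matrix $W$ with node set $V=\{1,\dots,n\}$. Suppose there is a nonempty maximal cohesive set $M\ne V$. Then there exists a set $X_0\subseteq\mathbb R^n$ of positive Lebesgue measure with the following property: for every $x(0)\in X_0$ and every sequence of updating nodes, the solution never reaches a consensus state (a vector with all entries equal). One such set is $$X_0=\Big\{x\in\mathbb R^n:\ \max_{j\in M}x_j<\min_{k\in V\setminus M}x_k \ \text{ or }\ \min_{j\in M}x_j>\max_{k\in V\setminus M}x_k\Big\}.$$
   Context: A matrix $W=(w_{ij})_{n\times n}$ is row-stochastic if $w_{ij}\ge 0$ for all $i,j$ and $\sum_{j=1}^n w_{ij}=1$ for every $i$. A set $M\subseteq V$ is cohesive if $\sum_{j\in M} w_{ij}\ge 1/2$ for every $i\in M$. A cohesive set $M$ is maximal cohesive if there is no $i\in V\setminus M$ with $\sum_{j\in M} w_{ij}>1/2$. A weighted median of $x\in\mathbb R^n$ with respect to row $i$ of $W$ is any $y\in\{x_1,\dots,x_n\}$ satisfying $\sum_{j:\,x_j<y}w_{ij}\le 1/2$ and $\sum_{j:\,x_j>y}w_{ij}\le 1/2$. $\mathrm{Med}_i(x;W)$ denotes this weighted median when it is unique. When it is not unique, $\mathrm{Med}_i(x;W)$ denotes the weighted median closest to $x_i$, which is then uniquely determined. Weighted-median opinion dynamics: given $x(0)\in\mathbb R^n$, at each time step $t+1$ ($t=0,1,2,\dots$) an index $i$ is drawn uniformly at random from $\{1,\dots,n\}$, independently of the past. Then $x_i(t+1)=\mathrm{Med}_i(x(t);W)$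 and $x_j(t+1)=x_j(t)$ for $j\ne i$. *)

(* Scalars range over an arbitrary realFieldType R
   (the paper's setting is R = the real numbers). *)
From HB Require Import structures.
From mathcomp Require Import all_boot all_order all_algebra.
Set Implicit Arguments. Unset Strict Implicit. Unset Printing Implicit Defensive.
Import Order.TTheory GRing.Theory Num.Theory.
Local Open Scope ring_scope.

Section WM.
Variables (R : realFieldType) (n : nat).

Definition row_stochastic (W : 'M[R]_n) : Prop :=
  (forall i j, 0 <= W i j) /\ (forall i, \sum_(j < n) W i j = 1).

Definition cohesive (W : 'M[R]_n) (M : {set 'I_n}) : Prop :=
  forall i, i \in M -> 1 / 2%:R <= \sum_(j in M) W i j.

Definition maximal_cohesive (W : 'M[R]_n) (M : {set 'I_n}) : Prop :=
  cohesive W M /\ ~ (exists i, i \notin M /\ 1 / 2%:R < \sum_(j in M) W i j).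

Definition is_wmedian (W : 'M[R]_n) (i : 'I_n) (x : 'I_n -> R) (y : R) : Prop :=
  [/\ exists j, y = x j,
      \sum_(j | x j < y) W i j <= 1 / 2%:R
    & \sum_(j | y < x j) W i j <= 1 / 2%:R].

Definition is_Med (W : 'M[R]_n) (i : 'I_n) (x : 'I_n -> R) (y : R) : Prop :=
  is_wmedian W i x y /\
  (forall z, is_wmedian W i x z -> `|y - x i| <= `|z - x i|).

Definition wm_step (W : 'M[R]_n) (i : 'I_n) (x x' : 'I_n -> R) : Prop :=
  is_Med W i x (x' i) /\ (forall j, j != i -> x' j = x j).

Definition wm_trajectory (W : 'M[R]_n) (s : nat -> 'I_n)
  (x : nat -> 'I_n -> R) : Prop :=
  forall t, wm_step W (s t) (x t) (x t.+1).

Definition consensus (x : 'I_n -> R) : Prop := forall j k, x j = x k.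

Definition inX0 (M : {set 'I_n}) (x : 'I_n -> R) : Prop :=
  (forall j k, j \in M -> k \notin M -> x j < x k) \/
  (forall j k, j \in M -> k \notin M -> x k < x j).

End WM.

From HB Require Import structures.
From mathcomp Require Import all_boot all_order all_algebra.
From mathcomp Require Import lra.
Set Implicit Arguments. Unset Strict Implicit. Unset Printing Implicit Defensive.

(* If the opinions in M all lie strictly below those outside M, this stays so
   forever.  A node of M puts weight >= 1/2 on M (cohesion), so its median
   cannot climb above max_M x unless M carries exactly half of its weight; but
   then max_M x is itself a median and is strictly closer to its own opinion,
   so the closest-median rule picks a value inside M's range.  Symmetrically,
   maximality gives every node outside M weight >= 1/2 on the complement.
   Negating all opinions handles X_0's second alternative, and since X_0 is
   cut out by finitely many strict inequalities it is open. *)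
Import Order.TTheory GRing.Theory Num.Theory.
Local Open Scope ring_scope.

Lemma ler_psum_subset (R : numDomainType) (I : finType) (P Q : pred I) (F : I -> R) :
  (forall i, 0 <= F i) -> (forall i, P i -> Q i) ->
  \sum_(i | P i) F i <= \sum_(i | Q i) F i.
Proof.
move=> F_ge0 PQ; rewrite big_mkcond [leRHS]big_mkcond /=.
apply: ler_sum => i _; case: (boolP (P i)) => [/PQ -> //| _].
by case: (Q i).
Qed.

Section Separation.
Variables (R : realFieldType) (n : nat).

Definition sep_below (S : {set 'I_n}) (x : 'I_n -> R) : Prop :=
  forall j k, j \in S -> k \notin S -> x j < x k.

Lemma inX0E (M : {set 'I_n}) (x : 'I_n -> R) :
  inX0 M x <-> sep_below M x \/ sep_below M (fun j => - x j).
Proof.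
rewrite /inX0 /sep_below.
by split=> -[h|h]; [left|right|left|right] => j k jM kM;
  rewrite ?ltrN2 //; move: (h j k jM kM); rewrite ?ltrN2.
Qed.

Lemma sep_below_open (S : {set 'I_n}) (x : 'I_n -> R) :
  sep_below S x -> exists2 eps : R, 0 < eps &
    forall y, (forall i, `|y i - x i| < eps) -> sep_below S y.
Proof.
move=> xS; pose P p := (p.1 \in S) && (p.2 \notin S).
pose gap := \big[Order.min/1]_(p | P p) (x p.2 - x p.1).
have gap_gt0 : 0 < gap.
  by apply: lt_bigmin => // -[j k] /andP[/= jS kS]; rewrite subr_gt0 xS.
exists (gap / 2%:R) => [|y xy j k jS kS]; first by lra.
have : gap <= x (j, k).2 - x (j, k).1 by apply: bigmin_le_cond; rewrite /P jS kS.
move/ltr_normlP: (xy j) => [? ?]; move/ltr_normlP: (xy k) => [? ?]; lra.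
Qed.

Lemma inX0_open (M : {set 'I_n}) (x : 'I_n -> R) :
  inX0 M x -> exists2 eps : R, 0 < eps &
    forall y, (forall i, `|y i - x i| < eps) -> inX0 M y.
Proof.
rewrite inX0E => -[|] /sep_below_open[eps eps_gt0 near_x];
  exists eps => // y xy; apply/inX0E.
- by left; apply: near_x.
- by right; apply: near_x => i; rewrite -opprD normrN.
Qed.

Lemma inX0_indicator_setC (M : {set 'I_n}) : inX0 M (fun j => (j \notin M)%:R : R).
Proof. by left=> j k jM kNM; rewrite jM kNM ltr01. Qed.

Lemma inX0_not_consensus (M : {set 'I_n}) (x : 'I_n -> R) j k :
  j \in M -> k \notin M -> inX0 M x -> ~ consensus x.
Proof. by move=> jM kNM [] /(_ j k jM kNM) + eq_x; rewrite (eq_x j k) ltxx. Qed.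
End Separation.

Section Medians.
Variables (R : realFieldType) (n : nat) (W : 'M[R]_n).

Lemma is_wmedianN i (x : 'I_n -> R) y :
  is_wmedian W i (fun j => - x j) (- y) <-> is_wmedian W i x y.
Proof.
rewrite /is_wmedian; under eq_bigl do rewrite ltrN2.
under [in X in [/\ _, _ & X]]eq_bigl do rewrite ltrN2.
split=> -[[j Ej] lo hi]; split=> //; exists j; first exact: oppr_inj.
by rewrite Ej.
Qed.

Lemma wm_stepN i (x x' : 'I_n -> R) :
  wm_step W i x x' -> wm_step W i (fun j => - x j) (fun j => - x' j).
Proof.
case=> -[med closest] other; split=> [|j /other -> //].
split; first exact/is_wmedianN.
move=> z; rewrite -[z]opprK => /is_wmedianN /closest.
by rewrite -!opprD !normrN.
Qed.

Hypothesis rsW : row_stochastic W.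

Lemma sum_row_setC (S : {set 'I_n}) i :
  \sum_(j in ~: S) W i j = 1 - \sum_(j in S) W i j.
Proof.
case: rsW => _ /(_ i) <-; rewrite [in RHS](bigID (mem S)) /= addrAC subrr add0r.
by apply: eq_bigl => j; rewrite in_setC.
Qed.

Lemma is_wmedian_max (S : {set 'I_n}) i (x : 'I_n -> R) jm :
  sep_below S x -> jm \in S -> (forall j, j \in S -> x j <= x jm) ->
  \sum_(j in S) W i j = 1 / 2%:R -> is_wmedian W i x (x jm).
Proof.
move=> xS jmS jm_max wS; have [W_ge0 _] := rsW.
split; first by exists jm.
- rewrite -wS; apply: ler_psum_subset => // j; apply: contraLR => jNS.
  by rewrite -leNgt ltW // xS.
- have <- : \sum_(j in ~: S) W i j = 1 / 2%:R by rewrite sum_row_setC wS; lra.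
  apply: ler_psum_subset => // j; apply: contraLR; rewrite inE negbK => jS.
  by rewrite -leNgt jm_max.
Qed.

Lemma is_Med_lt_setC (S : {set 'I_n}) i (x : 'I_n -> R) y k :
  sep_below S x -> i \in S -> 1 / 2%:R <= \sum_(j in S) W i j ->
  is_Med W i x y -> k \notin S -> y < x k.
Proof.
move=> xS iS wS_ge [[[j0 ->] lo _] closest] kNS.
have [j0S|j0NS] := boolP (j0 \in S); first exact: xS.
(* A median taken outside S forces S to carry exactly half the weight. *)
have [W_ge0 _] := rsW.
have wS_le : \sum_(j in S) W i j <= 1 / 2%:R.
  by apply: le_trans lo; apply: ler_psum_subset => // j /xS; apply.
case: (arg_maxP x iS) => jm jmS jm_max.
have jm_med : is_wmedian W i x (x jm).
  by apply: (is_wmedian_max xS jmS jm_max); apply: le_anti; rewrite wS_le wS_ge.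
have le_i_jm : x i <= x jm := jm_max i iS.
have lt_jm_j0 : x jm < x j0 := xS _ _ jmS j0NS.
have := closest _ jm_med.
by rewrite !ger0_norm; lra.
Qed.

Lemma wm_step_sep_below (S : {set 'I_n}) i (x x' : 'I_n -> R) :
  (forall j, j \in S -> 1 / 2%:R <= \sum_(l in S) W j l) ->
  (forall j, j \notin S -> \sum_(l in S) W j l <= 1 / 2%:R) ->
  sep_below S x -> wm_step W i x x' -> sep_below S x'.
Proof.
move=> S_heavy S_light xS step; have [Med_i other] := step.
have rises_above : i \in S -> forall k, k \notin S -> x' i < x k.
  by move=> iS k; apply: is_Med_lt_setC xS iS (S_heavy i iS) Med_i.
have falls_below : i \notin S -> forall j, j \in S -> x j < x' i.
  (* the mirror image: negate opinions and swap S with its complement *)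
  move=> iNS j jS; rewrite -ltrN2; have [MedN_i _] := wm_stepN step.
  apply: (is_Med_lt_setC (S := ~: S) _ _ _ MedN_i); rewrite ?inE ?negbK //.
  - by move=> j' k'; rewrite !inE negbK => j'NS k'S; rewrite ltrN2 xS.
  - by rewrite sum_row_setC; have := S_light i iNS; lra.
move=> j k jS kNS; have [ji|ji] := eqVneq j i; have [ki|ki] := eqVneq k i.
- by move: jS kNS; rewrite ji ki => ->.
- by rewrite ji (other k ki); apply: rises_above; rewrite -?ji.
- by rewrite ki (other j ji); apply: falls_below; rewrite -?ki.
- by rewrite (other j ji) (other k ki); apply: xS.
Qed.

Lemma inX0_wm_step (M : {set 'I_n}) i (x x' : 'I_n -> R) :
  maximal_cohesive W M -> inX0 M x -> wm_step W i x x' -> inX0 M x'.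
Proof.
move=> [M_heavy no_outsider] + step; rewrite !inX0E.
have M_light j : j \notin M -> \sum_(l in M) W j l <= 1 / 2%:R.
  by move=> jNM; rewrite leNgt; apply/negP => ?; apply: no_outsider; exists j.
case=> xM; [left|right]; apply: wm_step_sep_below M_heavy M_light xM _.
- exact: step.
- exact: wm_stepN step.
Qed.

Lemma inX0_wm_trajectory (M : {set 'I_n}) s (x : nat -> 'I_n -> R) :
  maximal_cohesive W M -> wm_trajectory W s x -> inX0 M (x 0%N) ->
  forall t, inX0 M (x t).
Proof. by move=> mcM traj x0M; elim=> // t xtM; apply: inX0_wm_step mcM xtM (traj t). Qed.
End Medians.

Theorem mainTheorem9 (R : realFieldType) (n : nat) (W : 'M[R]_n)
    (M : {set 'I_n}) :
  row_stochastic W -> maximal_cohesive W M -> M != set0 -> M != setT ->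
  [/\ (* X_0 is nonempty and open, hence of positive Lebesgue measure *)
      exists x0 : 'I_n -> R, inX0 M x0,
      (forall x : 'I_n -> R, inX0 M x ->
         exists2 eps : R, 0 < eps &
           forall y : 'I_n -> R, (forall i, `|y i - x i| < eps) -> inX0 M y)
    & (* no solution starting in X_0 ever reaches consensus *)
      forall (s : nat -> 'I_n) (x : nat -> 'I_n -> R),
        inX0 M (x 0%N) -> wm_trajectory W s x -> forall t, ~ consensus (x t)].
Proof.
move=> rsW mcM /set0Pn[j jM]; rewrite -properT => /properP[_ [k _ kNM]].
split.
- by exists (fun j => (j \notin M)%:R); apply: inX0_indicator_setC.
- exact: inX0_open.
- move=> s x x0M traj t.
  exact: inX0_not_consensus jM kNM (inX0_wm_trajectory rsW mcM traj x0M t).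
Qed.
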